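(* Let $d\ge0$ and let $f\colon\{0,1\}^m\to\{0,1\}^n$ be a $d$-local function. Then there exist a set $S\subseteq[m]$ and numbers $r,t$ with $$|S|\le\frac{r}{2^{28t-18}},\qquad r\ge\frac{n}{\mathrm{tow}_2(16d)},\qquad t\le\mathrm{tow}_2(16d),$$ such that for every fixing $\rho\in\{0,1\}^S$ of the input bits in $S$, the restricted function $f_\rho\colon\{0,1\}^{[m]\setminus S}\to\{0,1\}^n$ is $(d,r,t)$-local.
   Context: A function is $d$-local if each output bit depends on at most $d$ input bits; $I_g(i)$ is the set of input coordinates on which output $i$ of $g$ depends. $f_\rho(z')=f(\rho,z')$. $N_g(i)=\{j: I_g(j)\cap I_g(i)\neq\emptyset\}$. Neighborhoods $N_g(i_1),\dots,N_g(i_r)$ are non-connected if the sets $\bigcup_{j\in N_g(i_a)}I_g(j)$ are pairwise disjoint. $g$ is $(d,r,t)$-local if it is $d$-local and has $r$ non-connected neighborhoods each of size at most $t$. $\mathrm{tow}_2(0)=1$, $\mathrm{tow}_2(h)=2^{\mathrm{tow}_2(h-1)}$. *)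

From mathcomp Require Import all_boot all_order all_algebra.
Set Implicit Arguments.
Unset Strict Implicit.
Unset Printing Implicit Defensive.
Import Order.TTheory GRing.Theory Num.Theory.

Definition flip (I : finType) (x : {ffun I -> bool}) (j : I) : {ffun I -> bool} :=
  [ffun k => if k == j then ~~ x k else x k].

Definition depset (I O : finType) (g : {ffun I -> bool} -> {ffun O -> bool})
  (i : O) : {set I} :=
  [set j | [exists x, g x i != g (flip x j) i]].

Definition local (I O : finType) (d : nat)
  (g : {ffun I -> bool} -> {ffun O -> bool}) : Prop :=
  forall i : O, #|depset g i| <= d.

Definition nbhd (I O : finType) (g : {ffun I -> bool} -> {ffun O -> bool})
  (i : O) : {set O} :=
  [set j | ~~ [disjoint depset g j & depset g i]].

Definition nbhd_inputs (I O : finType) (g : {ffun I -> bool} -> {ffun O -> bool})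
  (i : O) : {set I} :=
  \bigcup_(j in nbhd g i) depset g j.

Definition drt_local (I O : finType) (d r t : nat)
  (g : {ffun I -> bool} -> {ffun O -> bool}) : Prop :=
  local d g /\
  exists A : {set O},
    #|A| = r /\
    (forall a, a \in A -> #|nbhd g a| <= t) /\
    (forall a b, a \in A -> b \in A -> a != b ->
       [disjoint nbhd_inputs g a & nbhd_inputs g b]).

Definition merge (I : finType) (S : {set I})
  (rho : {ffun {j : I | j \in S} -> bool})
  (z : {ffun {j : I | j \notin S} -> bool}) : {ffun I -> bool} :=
  [ffun j => match (insub j : option {j : I | j \in S}) with
             | Some k => rho k
             | None => match (insub j : option {j : I | j \notin S}) with
                       | Some k => z k
                       | None => false
                       end
             end].

Definition restrict (I O : finType) (S : {set I})
  (f : {ffun I -> bool} -> {ffun O -> bool})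
  (rho : {ffun {j : I | j \in S} -> bool}) :
  {ffun {j : I | j \notin S} -> bool} -> {ffun O -> bool} :=
  fun z => f (merge rho z).

Fixpoint tow2 (h : nat) : nat :=
  match h with
  | 0 => 1
  | h'.+1 => 2 ^ tow2 h'
  end.

(* Only the dependency sets D i = I_f(i) matter; the degree of an input is the number of
   outputs reading it.  An output reads at most d inputs, so it meets at most d of the 2d+1
   degree windows [t_j, t_(j+1)) cut out by the tower scales t_j = tow2 (3j + d + 3); hence for
   some t = t_j half of the outputs read no input of degree in [t, 2^2^2^t).  Such an output
   has at most d t light neighbours (outputs sharing with it an input of degree < t).  The
   same pigeonhole on the geometric scales t Q^k, Q = 2^(32 d t + 2), all below 2^2^2^t, gives
   a W such that for half of these outputs the light neighbourhood reads no input of degree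
   in [W, W Q).  Fix the set S of inputs of degree >= W Q; double counting gives
   |S| <= n d / (W Q).  Two remaining outputs can then only interact through inputs of degree
   < W, so a greedy independent set A has size about n / (d^3 t^2 W), and Q is large enough for
   |S| 2^(28 d t) <= |A|.  Restricting f only shrinks neighbourhoods, so f_rho is
   (d, |A|, d t)-local. *)

From Pilot Require Import Defs.
From mathcomp Require Import all_boot all_order all_algebra zify.
Import GRing.Theory Num.Theory.
Set Implicit Arguments. Unset Strict Implicit. Unset Printing Implicit Defensive.

Lemma leq_card_bigcup (T I : finType) (P : pred I) (F : I -> {set T}) :
  #|\bigcup_(i | P i) F i| <= \sum_(i | P i) #|F i|.
Proof.
elim/big_rec2: _ => [|i s U _ H]; first by rewrite cards0.
by apply: leq_trans (leq_card_setU _ _) _; rewrite leq_add2l.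
Qed.

Lemma leq_card_bigcup_const (T I : finType) (P : {pred I}) (F : I -> {set T}) c :
  {in P, forall i, #|F i| <= c} -> #|\bigcup_(i in P) F i| <= #|P| * c.
Proof.
move=> Fc; rewrite -sum_nat_const; apply: leq_trans (leq_card_bigcup _ _) _.
exact: leq_sum.
Qed.

Lemma exists_le_mean J (F : nat -> nat) :
  0 < J -> exists2 j, j < J & F j * J <= \sum_(i < J) F i.
Proof.
move=> J0; have [j _ jmin] := arg_minnP (fun i : 'I_J => F i) (isT : predT (Ordinal J0)).
exists j => //; apply: leq_trans (_ : \sum_(i < J) F j <= _).
  by rewrite sum_nat_const card_ord mulnC.
by apply: leq_sum => i _; apply: jmin.
Qed.

Lemma card_set_sum_bool (T : finType) (p : pred T) : #|[set x | p x]| = \sum_x p x.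
Proof. by rewrite -sum1dep_card big_mkcond. Qed.

Lemma double_count (T U : finType) (P : {pred T}) (Q : T -> U -> bool) :
  \sum_u #|[set x in P | Q x u]| = \sum_(x in P) #|[set u | Q x u]|.
Proof.
under eq_bigr do rewrite card_set_sum_bool.
rewrite exchange_big [RHS]big_mkcond; apply: eq_bigr => x _.
by rewrite card_set_sum_bool; case: (x \in P) => //; rewrite big1.
Qed.

Lemma card_window_le1 (s : nat -> nat) J v : {homo s : a b / a <= b} ->
  #|[set j : 'I_J | s j <= v < s j.+1]| <= 1.
Proof.
move=> s_homo; apply/card_le1_eqP => i j; rewrite !inE => /andP [si vi] /andP [sj vj].
apply/val_inj/eqP; rewrite eqn_leq; apply/andP; split; rewrite leqNgt; apply/negP => lt.
- by have := leq_trans vi (leq_trans (s_homo _ _ lt) sj); rewrite ltnn.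
- by have := leq_trans vj (leq_trans (s_homo _ _ lt) si); rewrite ltnn.
Qed.

Lemma exists_avoided_window (T U : finType) (P : {set U}) (Y : U -> {set T})
    (g : T -> nat) (s : nat -> nat) c :
  {homo s : a b / a <= b} -> {in P, forall a, #|Y a| <= c} ->
  exists2 j, j < (2 * c).+1 &
    #|P| <= 2 * #|[set a in P | [forall x in Y a, ~~ (s j <= g x < s j.+1)]]|.
Proof.
move=> s_homo Yc; set J := (2 * c).+1.
pose hit j a := [exists x in Y a, s j <= g x < s j.+1].
have sum_hits : \sum_(j < J) #|[set a in P | hit j a]| <= #|P| * c.
  rewrite double_count -sum_nat_const; apply: leq_sum => a aP.
  apply: leq_trans (Yc a aP); rewrite -[X in _ <= X]muln1.
  apply: leq_trans (leq_card_bigcup_const (F := fun x => [set j : 'I_J | s j <= g x < s j.+1])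
    (fun x _ => card_window_le1 J (g x) s_homo)).
  apply/subset_leq_card/subsetP => j; rewrite inE => /exists_inP [x xY xj].
  by apply/bigcupP; exists x; rewrite ?inE.
have [j jJ hj] := exists_le_mean (fun j => #|[set a in P | hit j a]|) (ltn0Sn (2 * c)).
exists j => //; have := cardsID [set a | hit j a] P.
have -> : P :\: [set a | hit j a] = [set a in P | [forall x in Y a, ~~ (s j <= g x < s j.+1)]].
  by apply/setP => a; rewrite !inE negb_exists_in andbC.
rewrite -setIdE.
move: (leq_trans hj sum_hits); rewrite /J; nia.
Qed.

Lemma exists_independent_subset (T : finType) (R : rel T) (C : {set T}) k :
  symmetric R -> {in C, forall a, #|[set b in C | (b != a) && R a b]| <= k} ->
  exists A : {set T},
    [/\ A \subset C, {in A &, forall a b, a != b -> ~~ R a b} & #|C| <= #|A| * k.+1].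
Proof.
move=> R_sym; elim: {C}_.+1 {-2}C (ltnSn #|C|) => // n IHn C ltCn Ck.
have [->|[c cC]] := set_0Vmem C.
  by exists set0; split; rewrite ?sub0set ?cards0 // => a; rewrite inE.
pose N := c |: [set b in C | (b != c) && R c b].
have cN : c \in N by rewrite setU11.
have sC'C : C :\: N \subset C by apply: subsetDl.
have [||A' [sA'C' indA' cardC']] := IHn (C :\: N).
- rewrite -ltnS; apply: leq_trans ltCn; apply: proper_card; apply/properP; split => //.
  by exists c; rewrite // in_setD cN.
- move=> a aC'; apply: leq_trans (Ck a (subsetP sC'C a aC')); apply/subset_leq_card/subsetP => b.
  by rewrite !inE => /andP [/andP [_ ->] ->].
have notRc : {in A', forall b, ~~ R c b}.
  move=> b /(subsetP sA'C'); rewrite !inE negb_or => /andP [/andP [bc nR] bC].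
  by apply: contra nR => Rcb; rewrite bC bc Rcb.
exists (c |: A'); split.
- by rewrite subUset sub1set cC (subset_trans sA'C' sC'C).
- move=> a b; rewrite !inE => /predU1P [->|aA] /predU1P [->|bA]; rewrite ?eqxx //.
  + by move=> _; apply: notRc.
  + by move=> _; rewrite R_sym notRc.
  + exact: indA'.
- have cA' : c \notin A' by apply: contraL cN => /(subsetP sA'C'); rewrite inE => /andP [].
  rewrite cardsU1 cA' mulSn -(cardsID N C) leq_add //.
  apply: leq_trans (subset_leq_card (subsetIr C N)) _.
  by rewrite cardsU1 -add1n leq_add ?leq_b1 ?Ck.
Qed.

Lemma tow2_homo : {homo tow2 : m n / m <= n}.
Proof.
move=> m n /subnK <-; elim: (n - m) => [|k IHk] //=.
by apply: leq_trans IHk (ltnW (ltn_expl _ _)).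
Qed.

Lemma ltn_tow2 h : h < tow2 h.
Proof. by elim: h => //= h IHh; apply: leq_trans (ltn_expl _ _); rewrite ltnS. Qed.

Lemma leq_exp2 n : n <= 2 ^ n.
Proof. exact: ltnW (ltn_expl n (ltnSn 1)). Qed.

Lemma leq_exp2_exp2_exp2 n : n <= 2 ^ (2 ^ (2 ^ n)).
Proof.
apply: leq_trans (leq_exp2 _) _.
by rewrite leq_exp2l // (leq_trans (leq_exp2 _)) // leq_exp2l // leq_exp2.
Qed.

Lemma linear_lt_exp2 t : 6 <= t -> 6 * t + 7 <= 2 ^ t.
Proof.
elim: t => // t IHt; rewrite leq_eqVlt => /predU1P [<- //|].
by rewrite ltnS => /IHt; rewrite expnS; lia.
Qed.

Lemma expn_le_exp2 t k : t ^ k <= 2 ^ (k * t).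
Proof.
case: k => [|k]; first by rewrite expn0 expn_gt0.
by rewrite mulnC expnM leq_exp2r // ltnW // ltn_expl.
Qed.

Lemma cubic_le_exp2 n : n * (n ^ 3).+1 <= 2 ^ (4 * n).
Proof.
rewrite mulSn expnD leq_mul ?leq_exp2 //.
by rewrite mulnC expnM ltn_exp2r // ltn_expl.
Qed.

Lemma heavy_cost s o a d tau W : 0 < W -> d <= tau ->
  s * (W * 2 ^ (32 * tau + 2)) <= o * d ->
  o <= 4 * (a * (tau * d * (W * tau)).+1) ->
  s * 2 ^ (28 * tau) <= a.
Proof.
move=> W_gt0 d_le cost_S card_O.
have poly : d * (tau * d * tau).+1 <= 2 ^ (4 * tau).
  apply: leq_trans (cubic_le_exp2 tau); apply: leq_mul => //.
  by rewrite ltnS expnS expnS expn1 mulnA leq_mul2r leq_mul2l d_le !orbT.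
have conflicts : (tau * d * (W * tau)).+1 <= (tau * d * tau).+1 * W by lia.
have : s * 2 ^ (28 * tau) * 2 ^ (4 * tau) * (4 * W) <= a * 2 ^ (4 * tau) * (4 * W).
  apply: leq_trans (_ : s * (W * 2 ^ (32 * tau + 2)) <= _).
    have -> : 2 ^ (32 * tau + 2) = 2 ^ (28 * tau) * 2 ^ (4 * tau) * 4.
      by rewrite -!expnD -[4]/(2 ^ 2) -expnD; congr (2 ^ _); lia.
    lia.
  apply: leq_trans cost_S _; apply: leq_trans (leq_mul card_O (leqnn d)) _.
  apply: leq_trans (_ : 4 * (a * ((tau * d * tau).+1 * W)) * d <= _).
    by rewrite leq_mul2r leq_mul2l leq_mul2l conflicts !orbT.
  have := leq_mul (leqnn (4 * a * W)) poly; lia.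
by rewrite !leq_pmul2r ?muln_gt0 ?expn_gt0.
Qed.

Lemma scales_below_tower d t : d <= t -> 6 <= t ->
  t * (2 ^ (32 * (d * t) + 2)) ^ (2 * (d * t * d)).+1 <= 2 ^ (2 ^ (2 ^ t)).
Proof.
move=> dt t6; rewrite -expnM; set E := _ * _.+1.
have E_le : t + E <= 2 ^ 7 * t ^ 5.
  have t5 : t ^ 5 = t * t * (t * t * t) by rewrite !expnS expn0; lia.
  have dtt := leq_mul dt (leqnn t); have dttd := leq_mul dtt dt.
  have tt5 : t <= t * t * (t * t * t) by rewrite -t5 -{1}(expn1 t) leq_pexp2l // (leq_trans _ t6).
  rewrite t5 /E; nia.
apply: leq_trans (_ : 2 ^ t * 2 ^ E <= _).
  by rewrite leq_mul2r leq_exp2 orbT.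
rewrite -expnD leq_exp2l //; apply: leq_trans E_le _.
apply: leq_trans (_ : 2 ^ 7 * 2 ^ (5 * t) <= _); first by rewrite leq_mul2l expn_le_exp2 orbT.
by rewrite -expnD leq_exp2l // addnC; apply: leq_trans (linear_lt_exp2 t6); lia.
Qed.

Lemma sextic_le_tower Z : 6 <= Z -> 8 * Z ^ 6 <= 2 ^ (2 ^ Z).
Proof.
move=> Z6; apply: leq_trans (_ : 2 ^ 3 * 2 ^ (6 * Z) <= _).
  by rewrite leq_mul2l expn_le_exp2 orbT.
by rewrite -expnD leq_exp2l // addnC; apply: leq_trans (linear_lt_exp2 Z6); lia.
Qed.

Lemma mul_le_tower d t Z : d <= t -> t <= Z -> 6 <= Z -> d * t <= 2 ^ (2 ^ Z).
Proof.
move=> dt tZ Z6; apply: leq_trans (sextic_le_tower Z6).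
have Z2 : Z * Z <= Z ^ 6 by rewrite mulnn leq_pexp2l // (leq_trans _ Z6).
by have := leq_mul (leq_trans dt tZ) tZ; lia.
Qed.

Lemma conflict_bound_le_tower d t W Z : d <= t -> t <= Z -> W <= Z -> 6 <= Z ->
  4 * (d * t * d * (W * (d * t))).+1 <= 2 ^ (2 ^ Z).
Proof.
move=> dt tZ WZ Z6; apply: leq_trans (sextic_le_tower Z6).
have Z6_gt0 : 0 < Z ^ 6 by rewrite expn_gt0 (leq_trans _ Z6).
have dtZ := leq_mul (leq_trans dt tZ) tZ.
have : d * t * d * (W * (d * t)) <= Z ^ 6.
  have -> : Z ^ 6 = Z * Z * Z * (Z * (Z * Z)) by rewrite !expnS expn0; lia.
  exact: leq_mul (leq_mul dtZ (leq_trans dt tZ)) (leq_mul WZ dtZ).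
lia.
Qed.

Lemma ler_nat_div_exp2z (R : numFieldType) (s a t : nat) :
  s * 2 ^ (28 * t) <= a * 2 ^ 18 ->
  (s%:R <= a%:R / 2%:R ^ (28 * t%:Z - 18)%R :> R)%R.
Proof.
move=> cost.
have -> : (28 * t%:Z - 18 = (28 * t)%N%:Z - (18%N)%:Z)%R by rewrite PoszM.
rewrite expfzDr ?pnatr_eq0 // -invr_expz -!exprnP.
have pow_gt0 n : (0 < 2%:R ^+ n :> R)%R by rewrite exprn_gt0 ?ltr0n.
rewrite ler_pdivlMr ?divr_gt0 // mulrA ler_pdivrMr //.
by rewrite -!natrX -!natrM ler_nat.
Qed.

Lemma ler_nat_div (R : numFieldType) (n a T : nat) :
  0 < T -> n <= a * T -> (n%:R / T%:R <= a%:R :> R)%R.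
Proof. by move=> T_gt0 le_n; rewrite ler_pdivrMr ?ltr0n // -natrM ler_nat. Qed.

Section DependencySets.

Variables (I O : finType) (D : O -> {set I}).

Definition degree (x : I) : nat := #|[set i | x \in D i]|.

Lemma sum_degree : \sum_x degree x = \sum_i #|D i|.
Proof.
rewrite /degree; under eq_bigr do rewrite card_set_sum_bool.
rewrite exchange_big; apply: eq_bigr => i _.
by rewrite -sum1_card [RHS]big_mkcond.
Qed.

Lemma card_heavy_inputs w : #|[set x | w <= degree x]| * w <= \sum_i #|D i|.
Proof.
rewrite -sum_degree -sum_nat_const big_mkcond; apply: leq_sum => x _.
by rewrite inE; case: ifP.
Qed.

Definition light_nbhd (t : nat) (a : O) : {set O} :=
  [set b | [exists x in D a, (degree x < t) && (x \in D b)]].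

Definition light_inputs (t : nat) (a : O) : {set I} :=
  \bigcup_(b in light_nbhd t a) D b.

Lemma light_nbhd_sym t a b : (b \in light_nbhd t a) = (a \in light_nbhd t b).
Proof.
by apply/idP/idP; rewrite !inE => /exists_inP [x xD /andP [xt xD']];
  apply/exists_inP; exists x; rewrite ?xt.
Qed.

(* Contains the neighbourhood of a in the restriction of f by any fixing of the inputs in S. *)
Definition nbhd_off (S : {set I}) (a : O) : {set O} :=
  [set b | [exists x in D a, (x \notin S) && (x \in D b)]].

Definition nbhd_inputs_off (S : {set I}) (a : O) : {set I} :=
  (\bigcup_(b in nbhd_off S a) D b) :\: S.

Lemma nbhd_off_sub_light (S : {set I}) t T a :
  (forall x, x \notin S -> degree x < T) ->
  [forall x in D a, ~~ (t <= degree x < T)] -> nbhd_off S a \subset light_nbhd t a.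
Proof.
move=> ST /forall_inP avoid; apply/subsetP => b; rewrite !inE.
case/exists_inP => x xDa /andP [xS xDb]; apply/exists_inP; exists x; rewrite // xDb andbT.
by move: (avoid x xDa) (ST x xS) => /[swap] ->; rewrite andbT -ltnNge.
Qed.

Lemma nbhd_inputs_off_sub (S : {set I}) t a :
  nbhd_off S a \subset light_nbhd t a -> nbhd_inputs_off S a \subset light_inputs t a :\: S.
Proof.
move=> /subsetP sub; apply: setSD; apply/bigcupsP => b /sub bL.
exact: (bigcup_max b bL).
Qed.

Definition conflict (S : {set I}) (t : nat) : rel O :=
  fun a b => ~~ [disjoint light_inputs t a :\: S & light_inputs t b :\: S].

Lemma conflict_sym S t : symmetric (conflict S t).
Proof. by move=> a b; rewrite /conflict disjoint_sym. Qed.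

Variable d : nat.
Hypothesis card_D : forall i, #|D i| <= d.

Lemma sum_card_D : \sum_i #|D i| <= #|O| * d.
Proof. by rewrite -sum_nat_const; apply: leq_sum. Qed.

Lemma card_light_nbhd t a : #|light_nbhd t a| <= d * t.
Proof.
pose L := [set x in D a | degree x < t].
apply: leq_trans (_ : #|\bigcup_(x in L) [set b | x \in D b]| <= _).
  apply/subset_leq_card/subsetP => b; rewrite inE => /exists_inP [x xD /andP [xt xb]].
  by apply/bigcupP; exists x; rewrite !inE ?xD.
apply: leq_trans (leq_card_bigcup_const (c := t) _) _.
  by move=> x; rewrite inE => /andP [_ /ltnW].
rewrite leq_mul2r (leq_trans _ (card_D a)) ?orbT //.
by apply/subset_leq_card/subsetP => x /[!inE] /andP [].
Qed.

Lemma card_light_inputs t a : #|light_inputs t a| <= d * t * d.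
Proof.
apply: leq_trans (leq_card_bigcup_const (c := d) _) _; first by move=> b _.
by rewrite leq_mul2r card_light_nbhd orbT.
Qed.

Lemma card_conflict S t W a :
  {in light_inputs t a :\: S, forall x, degree x < W} ->
  #|[set b | conflict S t a b]| <= d * t * d * (W * (d * t)).
Proof.
move=> light_a; pose X := light_inputs t a :\: S.
apply: leq_trans (_ : #|\bigcup_(x in X) \bigcup_(b' in [set b' | x \in D b']) light_nbhd t b'| <= _).
  apply/subset_leq_card/subsetP => b; rewrite inE /conflict -setI_eq0.
  case/set0Pn => x /setIP [xX /setDP [/bigcupP [b' bb' xb'] _]].
  apply/bigcupP; exists x => //; apply/bigcupP; exists b'; first by rewrite inE.
  by rewrite light_nbhd_sym.
apply: leq_trans (leq_card_bigcup_const (c := W * (d * t)) _) _.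
  move=> x /light_a xW; apply: leq_trans (leq_card_bigcup_const (c := d * t) _) _.
    by move=> b' _; apply: card_light_nbhd.
  by rewrite leq_mul2r ltnW ?orbT.
rewrite leq_mul2r (leq_trans _ (card_light_inputs t a)) ?orbT //.
by apply/subset_leq_card; rewrite subsetDl.
Qed.

Lemma exists_independent_light_outputs (S : {set I}) (C : {set O}) t T W W' :
  W' <= T -> (forall x, x \notin S -> degree x < W') ->
  {in C, forall a, [forall x in D a, ~~ (t <= degree x < T)]} ->
  {in C, forall a, [forall x in light_inputs t a, ~~ (W <= degree x < W')]} ->
  exists A : {set O},
    [/\ {in A, forall a, #|nbhd_off S a| <= d * t},
        {in A &, forall a b, a != b ->
           [disjoint nbhd_inputs_off S a & nbhd_inputs_off S b]} &
        #|C| <= #|A| * (d * t * d * (W * (d * t))).+1].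
Proof.
move=> W'T S_light C_avoid C_gap.
have sub_light : {in C, forall a, nbhd_off S a \subset light_nbhd t a}.
  move=> a /C_avoid; apply: nbhd_off_sub_light => x /S_light.
  by move/leq_trans; apply.
have [|A [sAC indA cardC]] := exists_independent_subset (conflict_sym S t)
  (C := C) (k := d * t * d * (W * (d * t))).
  move=> a aC; have light_a : {in light_inputs t a :\: S, forall x, degree x < W}.
    move=> x /setDP [xa /S_light xW']; move/forall_inP: (C_gap a aC) => /(_ x xa).
    by rewrite xW' andbT -ltnNge.
  apply: leq_trans (card_conflict light_a).
  by apply/subset_leq_card/subsetP => b /[!inE] /andP [_ /andP []].
exists A; split=> // [a aA|a b aA bA ab].
  have aC := subsetP sAC a aA.
  exact: leq_trans (subset_leq_card (sub_light a aC)) (card_light_nbhd _ _).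
have [aC bC] := (subsetP sAC a aA, subsetP sAC b bA).
apply: disjointW (nbhd_inputs_off_sub (sub_light a aC)) (nbhd_inputs_off_sub (sub_light b bC)) _.
by apply/negPn; apply: indA.
Qed.

Lemma exists_sparse_restriction_at_scale t (C : {set O}) :
  d <= t -> 6 <= t -> #|O| <= 2 * #|C| ->
  {in C, forall a, [forall x in D a, ~~ (t <= degree x < 2 ^ (2 ^ (2 ^ t)))]} ->
  exists (S : {set I}) (A : {set O}),
  [/\ {in A, forall a, #|nbhd_off S a| <= d * t},
      {in A &, forall a b, a != b -> [disjoint nbhd_inputs_off S a & nbhd_inputs_off S b]},
      #|S| * 2 ^ (28 * (d * t)) <= #|A| &
      #|O| <= #|A| * 2 ^ (2 ^ (2 ^ (2 ^ (2 ^ t))))].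
Proof.
move=> d_le_t t_ge6 card_O C_avoid; set Z := 2 ^ (2 ^ (2 ^ t)).
pose Q := 2 ^ (32 * (d * t) + 2); pose w k := t * Q ^ k.
have w_homo : {homo w : a b / a <= b}.
  by move=> a b ab; rewrite leq_mul2l leq_pexp2l ?expn_gt0 ?orbT.
have [k k_lt C'_big] := exists_avoided_window (P := C) degree w_homo
  (fun a _ => card_light_inputs t a).
set C' := [set a in _ | _] in C'_big.
have wZ : w k.+1 <= Z by apply: leq_trans (w_homo _ _ k_lt) (scales_below_tower _ _).
pose S := [set x | w k.+1 <= degree x].
have S_light x : x \notin S -> degree x < w k.+1 by rewrite inE -ltnNge.
have C'_avoid : {in C', forall a, [forall x in D a, ~~ (t <= degree x < Z)]}.
  by move=> a /[!inE] /andP [/C_avoid].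
have C'_gap : {in C', forall a,
    [forall x in light_inputs t a, ~~ (w k <= degree x < w k.+1)]}.
  by move=> a /[!inE] /andP [].
have [A [nbhd_A disj_A card_C']] :=
  exists_independent_light_outputs wZ S_light C'_avoid C'_gap.
have {}card_O : #|O| <= 4 * (#|A| * (d * t * d * (w k * (d * t))).+1) by lia.
have heavy_S : #|S| * (w k * Q) <= #|O| * d.
  rewrite (_ : w k * Q = w k.+1); last by rewrite /w expnSr mulnA.
  exact: leq_trans (card_heavy_inputs _) sum_card_D.
exists S, A; split => //.
- have w_gt0 : 0 < w k by rewrite muln_gt0 expn_gt0; lia.
  have d_le_tau : d <= d * t by rewrite leq_pmulr; lia.
  exact: heavy_cost w_gt0 d_le_tau heavy_S card_O.
- have t_le_Z : t <= Z := leq_exp2_exp2_exp2 t.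
  apply: leq_trans card_O _; rewrite mulnCA leq_mul2l conflict_bound_le_tower ?orbT //.
    exact: leq_trans (w_homo _ _ (leqnSn k)) wZ.
  exact: leq_trans t_le_Z.
Qed.

Lemma exists_sparse_restriction_pos :
  0 < d ->
  exists (S : {set I}) (A : {set O}) (t : nat),
  [/\ {in A, forall a, #|nbhd_off S a| <= t},
      {in A &, forall a b, a != b -> [disjoint nbhd_inputs_off S a & nbhd_inputs_off S b]},
      #|S| * 2 ^ (28 * t) <= #|A| * 2 ^ 18,
      #|O| <= #|A| * tow2 (16 * d) &
      t <= tow2 (16 * d)].
Proof.
move=> d_gt0; pose scale j := tow2 (3 * j + d + 3).
have scale_homo : {homo scale : a b / a <= b} by move=> a b ab; apply: tow2_homo; lia.
have [j j_lt C_big] := exists_avoided_window (P := [set: O]) degree scale_homo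
  (fun a _ => card_D a).
rewrite cardsT in C_big; set C := [set a in _ | _] in C_big; set t := scale j.
have t_big : 3 * j + d + 3 < t := ltn_tow2 _.
have t16 : 16 <= t by apply: (@tow2_homo 3); lia.
have [d_le_t t_ge6] : d <= t /\ 6 <= t by lia.
have C_avoid : {in C, forall a, [forall x in D a, ~~ (t <= degree x < 2 ^ (2 ^ (2 ^ t)))]}.
  by move=> a /[!inE]; rewrite /scale (_ : 3 * j.+1 + d + 3 = (3 * j + d + 3).+3) //; lia.
have [S [A [nbhd_A disj_A cost_S card_O]]] :=
  exists_sparse_restriction_at_scale d_le_t t_ge6 C_big C_avoid.
have tower_le : 2 ^ (2 ^ (2 ^ (2 ^ (2 ^ t)))) <= tow2 (16 * d).
  by apply: (@tow2_homo (3 * j + d + 3).+4.+1); lia.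
exists S, A, (d * t); split => //.
- by apply: leq_trans (leq_pmulr _ _).
- by apply: leq_trans card_O _; rewrite leq_mul2l tower_le orbT.
- have t_le_Z := leq_exp2_exp2_exp2 t.
  exact: leq_trans (mul_le_tower d_le_t t_le_Z (leq_trans t_ge6 t_le_Z)) tower_le.
Qed.

Lemma exists_sparse_restriction :
  exists (S : {set I}) (A : {set O}) (t : nat),
  [/\ {in A, forall a, #|nbhd_off S a| <= t},
      {in A &, forall a b, a != b -> [disjoint nbhd_inputs_off S a & nbhd_inputs_off S b]},
      #|S| * 2 ^ (28 * t) <= #|A| * 2 ^ 18,
      #|O| <= #|A| * tow2 (16 * d) &
      t <= tow2 (16 * d)].
Proof.
have [d0|d_gt0] := posnP d; last exact: exists_sparse_restriction_pos.
have D0 i : D i = set0 by apply/eqP; rewrite -cards_eq0 -leqn0 -d0.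
have nbhd0 a : nbhd_off set0 a = set0.
  by apply/setP => b; rewrite !inE D0; apply/exists_inP => -[x]; rewrite inE.
exists set0, [set: O], 0; split=> //.
- by move=> a _; rewrite nbhd0 cards0.
- by move=> a b _ _ _; rewrite /nbhd_inputs_off !nbhd0 big_set0 set0D -setI_eq0 set0I.
- by rewrite cards0.
- by rewrite d0 cardsT muln1.
Qed.

End DependencySets.

Section Restriction.

Variables (I O : finType) (f : {ffun I -> bool} -> {ffun O -> bool}) (S : {set I}).
Variable rho : {ffun {j : I | j \in S} -> bool}.

Lemma merge_flip (z : {ffun {j : I | j \notin S} -> bool}) (j : {j : I | j \notin S}) :
  Defs.merge rho (flip z j) = flip (Defs.merge rho z) (val j).
Proof.
apply/ffunP => k; rewrite !ffunE; case: insubP => [k' kS _|kS].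
  by rewrite ifN //; apply: contraTneq kS => ->; exact: (valP j).
case: insubP => [k' _ <-|]; last by rewrite kS.
by rewrite ffunE inj_eq //; apply: val_inj.
Qed.

Lemma val_depset_restrict i (j : {j : I | j \notin S}) :
  j \in depset (restrict f rho) i -> val j \in depset f i.
Proof.
rewrite !inE => /existsP [z fz]; apply/existsP; exists (Defs.merge rho z).
by rewrite /restrict merge_flip in fz.
Qed.

Lemma depset_restrict_sub i : val @: depset (restrict f rho) i \subset depset f i :\: S.
Proof.
apply/subsetP => _ /imsetP [j jD ->].
by rewrite inE (valP j) val_depset_restrict.
Qed.

Lemma nbhd_restrict_sub a : nbhd (restrict f rho) a \subset nbhd_off (depset f) S a.
Proof.
apply/subsetP => b; rewrite !inE -setI_eq0 => /set0Pn [x /setIP [xb xa]].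
apply/exists_inP; exists (val x); first exact: val_depset_restrict.
by rewrite (valP x) val_depset_restrict.
Qed.

Lemma nbhd_inputs_restrict_sub a :
  val @: nbhd_inputs (restrict f rho) a \subset nbhd_inputs_off (depset f) S a.
Proof.
apply/subsetP => _ /imsetP [x /bigcupP [b bN xb] ->].
rewrite inE (valP x); apply/bigcupP; exists b; last exact: val_depset_restrict.
exact: subsetP (nbhd_restrict_sub a) b bN.
Qed.

Lemma drt_local_restrict d t (A : {set O}) :
  local d f ->
  {in A, forall a, #|nbhd_off (depset f) S a| <= t} ->
  {in A &, forall a b, a != b ->
     [disjoint nbhd_inputs_off (depset f) S a & nbhd_inputs_off (depset f) S b]} ->
  drt_local d #|A| t (restrict f rho).
Proof.
move=> f_local nbhd_A disj_A; split.
  move=> i; rewrite -(card_imset _ val_inj).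
  exact: leq_trans (subset_leq_card (subset_trans (depset_restrict_sub i) (subsetDl _ _))) _.
exists A; split=> //; split=> [a aA|a b aA bA ab].
  exact: leq_trans (subset_leq_card (nbhd_restrict_sub a)) (nbhd_A a aA).
rewrite -(imset_disjoint val_inj).
exact: disjointW (nbhd_inputs_restrict_sub a) (nbhd_inputs_restrict_sub b) (disj_A a b aA bA ab).
Qed.

End Restriction.

Theorem mainTheorem14 (d m n : nat)
  (f : {ffun 'I_m -> bool} -> {ffun 'I_n -> bool}) :
  local d f ->
  exists (S : {set 'I_m}) (r t : nat),
    ((#|S|%:R : rat) <= (r%:R : rat) / ((2%:R : rat) ^ (28 * (t%:Z) - 18)%R))%R /\
    ((r%:R : rat) >= (n%:R : rat) / ((tow2 (16 * d))%:R : rat))%R /\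
    t <= tow2 (16 * d) /\
    forall rho : {ffun {j : 'I_m | j \in S} -> bool},
      drt_local d r t (@restrict _ _ S f rho).
Proof.
move=> f_local.
have [S [A [t [nbhd_A disj_A cost_S card_O t_le]]]] := exists_sparse_restriction f_local.
exists S, #|A|, t; split; first exact: ler_nat_div_exp2z.
have tow_gt0 : 0 < tow2 (16 * d) := leq_ltn_trans (leq0n _) (ltn_tow2 _).
split; first by apply: ler_nat_div; rewrite // -[X in X <= _](card_ord n).
by split=> // rho; apply: drt_local_restrict.
Qed.
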